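(* Let $N$ be a network with $n$ boundary vertices and excedance $k$, let $r\ge1$ and $\lambda$ with $0\le\lambda_i\le r$, $\sum\lambda_i=kr$. Let $\mathcal S=(S_1,\dots,S_n)$ be a list of boundary label subsets and let $\mathcal I=(I_1,\dots,I_r)$ be the dual list, $I_i=\{j\in[n]: i\in S_j\}$ (so $|I_i|=k$ and the multiset union of the $I_i$ is $\{1^{\lambda_1},\dots,n^{\lambda_n}\}$). Then $$\Delta_{I_1}(N)\Delta_{I_2}(N)\cdots\Delta_{I_r}(N)=\mathrm{sign}(\mathcal S)\,\mathrm{Web}_r(N;\lambda)(E_{\mathcal S}).$$
   Context: Networks. A planar bipartite graph in the disk is a graph $G$ embedded in a closed disk, vertices colored black or white, every edge joining opposite colors; $n$ boundary vertices labeled $1,\dots,n$ counterclockwise, all black, the $i$-th incident to at most one edge $b_i$; others interior. A network $N$ is such a $G$ with edge weights $\mathrm{wt}(e)\in\mathbb C^\times$. An almost perfect matching $\pi$ uses every interior vertex exactly once and each boundary vertex at most once; $\partial(\pi)$ is the set of boundary vertices used; $\mathrm{wt}(\pi)=\prod_{e\in\pi}\mathrm{wt}(e)$; excedance $k=|\partial(\pi)|$ = #interior white − #interior black vertices; $N$ is assumed to have an almost perfect matching. $\Delta_I(N)=\sum_{\partial(\pi)=I}\mathrm{wt}(\pi)$. Tensors. $U=\mathbb C^r$, basis $E_1,\dots,E_r$, $E_1\wedge\cdots\wedge E_r=1$. $\mathcal W_\lambda(U)=\mathrm{Hom}_{SL(U)}(\bigotimes_i\bigwedge^{\lambda_i}U,\mathbb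 C)$. $E_S$ = wedge of $E_i$, $i\in S$, increasingly. Boundary label subsets: $\mathcal S=(S_1,\dots,S_n)$, $|S_j|=\lambda_j$, multiset union $\{1^k,\dots,r^k\}$; $E_{\mathcal S}=E_{S_1}\otimes\cdots\otimes E_{S_n}$; $\mathrm{sign}(\mathcal S)=(-1)^{\mathrm{inv}}$, $\mathrm{inv}$ = inversions of the word listing $S_1$ increasingly, then $S_2$, etc. Weblike subgraphs: multiplicities $m(e)\in\{0,\dots,r\}$ on edges of $G$ summing to $r$ at each interior vertex; degree $\lambda(W)=(m(b_1),\dots,m(b_n))$; $\mathrm{wt}(W)=\prod_e\mathrm{wt}(e)^{m(e)}$. Consistent labeling: sets $S(e)\subset[r]$, $|S(e)|=m(e)$, pairwise disjoint at each interior vertex; $a(\mathcal S;W)$ = number with $S(b_j)=S_j$. $\mathbf W\in\mathcal W_\lambda(U)$ is the unique invariant with $\mathbf W(E_{\mathcal S})=\mathrm{sign}(\mathcal S)a(\mathcal S;W)$ for all $\mathcal S$. $\mathrm{Web}_r(N;\lambda)=\sum_{\lambda(W)=\lambda}\mathrm{wt}(W)\mathbf W$. *)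

From HB Require Import structures.
From mathcomp Require Import all_boot all_order all_algebra.
Set Implicit Arguments. Unset Strict Implicit. Unset Printing Implicit Defensive.
Import Order.TTheory GRing.Theory Num.Theory.

(*  - black v  : colour of v (true = black, false = white)                   *)
(*  - wend e / bend e : the white / black endpoint of edge e                 *)
(*  - bd j : the boundary vertex labelled j (j : 'I_n, i.e. labels 1..n are  *)
(*           0..n-1 here)                                                   *)
Record bgraph (n : nat) := BGraph {
  gV : finType;
  gE : finType;
  black : pred gV;
  wend : gE -> gV;
  bend : gE -> gV;
  bd : 'I_n -> gV
}.

Section Network.
Variables (n : nat) (G : bgraph n).
Local Notation V := (gV G).
Local Notation E := (gE G).

Definition incident (e : E) (v : V) : bool :=
  (wend e == v) || (bend e == v).

Definition interior (v : V) : bool := ~~ [exists j, @bd n G j == v].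

Definition is_bgraph : Prop :=
  [/\ forall e : E, black (bend e) && ~~ black (wend e),
      injective (@bd n G),
      forall j, black (@bd n G j) &
      forall j, (#|[set e | incident e (@bd n G j)]| <= 1)%N ].

Definition exced : nat :=
  (#|[set v | interior v && ~~ black v]|
   - #|[set v | interior v && black v]|)%N.

Definition mdeg (pi : {set E}) (v : V) : nat := #|[set e in pi | incident e v]|.

Definition almost_perfect (pi : {set E}) : bool :=
  [forall v, if interior v then mdeg pi v == 1%N else (mdeg pi v <= 1)%N].

Definition bdry (pi : {set E}) : {set 'I_n} := [set j | mdeg pi (@bd n G j) == 1%N].

Section Weights.
Variables (R : comNzRingType) (wt : E -> R).
Local Open Scope ring_scope.

Definition wt_match (pi : {set E}) : R := \prod_(e in pi) wt e.

Definition Delta (I : {set 'I_n}) : R :=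
  \sum_(pi : {set E} | almost_perfect pi && (bdry pi == I)) wt_match pi.

Variable r : nat.

Definition mult_at (m : {ffun E -> 'I_r.+1}) (v : V) : nat :=
  (\sum_(e | incident e v) (m e : nat))%N.

Definition weblike (m : {ffun E -> 'I_r.+1}) : bool :=
  [forall v, interior v ==> (mult_at m v == r)].

(* degree lambda(W) = (m(b_1),...,m(b_n)); m(b_j) = 0 if no edge at bd j *)
Definition web_degree (m : {ffun E -> 'I_r.+1}) (j : 'I_n) : nat :=
  mult_at m (@bd n G j).

Definition wt_web (m : {ffun E -> 'I_r.+1}) : R := \prod_e wt e ^+ m e.

Definition consistent (m : {ffun E -> 'I_r.+1}) (L : {ffun E -> {set 'I_r}}) : bool :=
  [forall e, #|L e| == (m e : nat)] &&
  [forall v, interior v ==>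
     [forall e, forall e', (incident e v && incident e' v && (e != e'))
                             ==> [disjoint L e & L e']]].

(* label of the boundary edge b_j (empty if there is no such edge) *)
Definition blabel (L : {ffun E -> {set 'I_r}}) (j : 'I_n) : {set 'I_r} :=
  \bigcup_(e | incident e (@bd n G j)) L e.

Definition a_count (S : 'I_n -> {set 'I_r}) (m : {ffun E -> 'I_r.+1}) : nat :=
  #|[set L : {ffun E -> {set 'I_r}} |
       consistent m L && [forall j, blabel L j == S j]]|.

End Weights.
End Network.

Definition label_word (n r : nat) (S : 'I_n -> {set 'I_r}) : seq nat :=
  flatten [seq sort leq [seq val i | i <- enum (S j)] | j <- enum 'I_n].

Definition inversions (w : seq nat) : nat :=
  (\sum_(p < size w) \sum_(q < size w | p < q) (nth 0 w q < nth 0 w p : nat))%N.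

Definition signS (R : nzRingType) (n r : nat) (S : 'I_n -> {set 'I_r}) : R :=
  (-1) ^+ inversions (label_word S).

Definition dual_list (n r : nat) (S : 'I_n -> {set 'I_r}) (i : 'I_r) : {set 'I_n} :=
  [set j | i \in S j].

(* Value of the web invariant bold-W on E_S: by definition it is
   sign(S) * a(S;W); and Web_r(N;lambda)(E_S) = sum over weblike W of degree
   lambda of wt(W) * bold-W(E_S). *)
Definition web_invariant_at (n : nat) (G : bgraph n) (R : comNzRingType) (r : nat)
  (m : {ffun gE G -> 'I_r.+1}) (S : 'I_n -> {set 'I_r}) : R :=
  (signS R S * (a_count S m)%:R)%R.

Definition Web_at (n : nat) (G : bgraph n) (R : comNzRingType) (wt : gE G -> R)
  (r : nat) (lam : 'I_n -> nat) (S : 'I_n -> {set 'I_r}) : R :=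
  (\sum_(m : {ffun gE G -> 'I_r.+1} |
           weblike m && [forall j, web_degree m j == lam j])
     wt_web wt m * web_invariant_at R m S)%R.

From HB Require Import structures.
From mathcomp Require Import all_boot all_order all_algebra.
Import GRing.Theory Num.Theory.

Set Implicit Arguments. Unset Strict Implicit. Unset Printing Implicit Defensive.

(* An r-tuple of almost perfect matchings (pi_1, ..., pi_r) is the same thing
   as an edge labeling L with L e = {i | e \in pi_i}.  Each interior vertex is
   covered exactly once by every pi_i iff the label sets around it are
   pairwise disjoint and have total size r, i.e. iff L is a consistent
   labeling of the weblike subgraph m(e) = #|L e|; the boundary of pi_i is
   then the dual set I_i, and prod_i wt(pi_i) = wt(m).  Expanding the product
   of the Delta_{I_i} therefore gives the sum of wt(W) over all consistent
   labelings of weblike W with boundary labels S, which is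
   sign(S) Web_r(N;lambda)(E_S) since sign(S)^2 = 1. *)

Section LabelCounting.
Variables (T : finType) (r : nat) (A : {set T}) (L : T -> {set 'I_r}).

Lemma sum_card_labels :
  (\sum_(e in A) #|L e|)%N = (\sum_(i < r) #|[set e in A | i \in L e]|)%N.
Proof.
transitivity (\sum_(e in A) \sum_(i < r) ((i \in L e) : nat))%N.
  apply: eq_bigr => e _; rewrite -sum1_card big_mkcond /=.
  by apply: eq_bigr => i _; case: (i \in L e).
rewrite exchange_big /=; apply: eq_bigr => i _.
rewrite -sum1_card big_mkcond /= [in RHS]big_mkcond /=.
by apply: eq_bigr => e _; rewrite !inE; case: (e \in A); case: (i \in L e).
Qed.

Lemma labels_once_iff :
  (forall i : 'I_r, #|[set e in A | i \in L e]| = 1%N) <->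
  (\sum_(e in A) #|L e|)%N = r /\
  (forall e e', e \in A -> e' \in A -> e != e' -> [disjoint L e & L e']).
Proof.
split=> [once | [sum_r disjL]].
  split.
    by rewrite sum_card_labels (eq_bigr (fun _ => 1%N)) // sum1_card card_ord.
  move=> e e' eA e'A ne; rewrite -setI_eq0; apply/eqP/setP => i.
  rewrite !inE; apply/negP => /andP[ie ie'].
  have : (#|[set e; e']| <= #|[set x in A | i \in L x]|)%N.
    by apply: subset_leq_card; apply/subsetP => x; rewrite !inE => /orP[]/eqP->;
      rewrite ?eA ?e'A ?ie ?ie'.
  by rewrite once cards2 ne.
have le1 i : (#|[set e in A | i \in L e]| <= 1)%N.
  apply/card_le1P => x; rewrite !inE => /andP[xA ix] y; rewrite !inE.
  apply/idP/idP => [/andP[yA iy] | /eqP->]; last by rewrite xA ix.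
  apply/negPn/negP => ne.
  by have := disjointFr (disjL _ _ yA xA ne) iy; rewrite ix.
have [_] := leqif_sum (fun i (_ : predT i) => leqif_eq (le1 i)).
rewrite -sum_card_labels sum_r sum1_card card_ord eqxx => /esym/forallP once i.
exact/eqP/once.
Qed.

End LabelCounting.

Section Labelings.
Variables (n : nat) (G : bgraph n) (r : nat).
Implicit Types (L : {ffun gE G -> {set 'I_r}}) (v : gV G).

Definition label_class L : {ffun 'I_r -> {set gE G}} :=
  [ffun i => [set e | i \in L e]].

Definition class_labeling (f : {ffun 'I_r -> {set gE G}}) :
  {ffun gE G -> {set 'I_r}} := [ffun e => [set i | e \in f i]].

Definition label_mult L : {ffun gE G -> 'I_r.+1} := [ffun e => inord #|L e|].

Definition labels_disjoint_at L v : bool :=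
  [forall e, forall e', (incident e v && incident e' v && (e != e'))
                          ==> [disjoint L e & L e']].

Definition web_labeling (S : 'I_n -> {set 'I_r}) L : bool :=
  [&& weblike (label_mult L), consistent (label_mult L) L
    & [forall j, blabel L j == S j]].

Lemma label_class_bij : bijective label_class.
Proof.
exists class_labeling => x;
  by apply/ffunP => e; apply/setP => i; rewrite !(ffunE, inE).
Qed.

Lemma label_multE L e : (label_mult L e : nat) = #|L e|.
Proof. by rewrite ffunE inordK // ltnS -[X in (_ <= X)%N]card_ord max_card. Qed.

Lemma mdeg_label_class L i v :
  mdeg (label_class L i) v = #|[set e in [set e | incident e v] | i \in L e]|.
Proof. by apply: eq_card => e; rewrite !inE ffunE inE andbC. Qed.

Lemma mult_at_label_mult L v :
  mult_at (label_mult L) v = (\sum_(e in [set e | incident e v]) #|L e|)%N.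
Proof. by apply: eq_big => [e|e _]; rewrite ?inE ?label_multE. Qed.

Lemma consistent_label_mult (m : {ffun gE G -> 'I_r.+1}) L :
  consistent m L -> m = label_mult L.
Proof.
move=> /andP[/forallP sizeL _]; apply/ffunP => e; apply: val_inj => /=.
by rewrite label_multE; apply/esym/eqP/sizeL.
Qed.

Lemma mdeg_label_class1P L v :
  (forall i, mdeg (label_class L i) v == 1%N) <->
  (mult_at (label_mult L) v == r) && labels_disjoint_at L v.
Proof.
have once_iff := labels_once_iff [set e | incident e v] L.
split=> [once | /andP[/eqP sum_r /forallP disjL] i].
  have [sum_r disjL] : (\sum_(e in [set e | incident e v]) #|L e|)%N = r /\
      forall e e', e \in [set e | incident e v] -> e' \in [set e | incident e v] ->
        e != e' -> [disjoint L e & L e'].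
    by apply/once_iff => i; apply/eqP; rewrite -mdeg_label_class.
  rewrite mult_at_label_mult sum_r eqxx /=.
  apply/forallP => e; apply/forallP => e'; apply/implyP.
  by move=> /andP[/andP[ev e'v] ne]; apply: disjL; rewrite ?inE.
rewrite mdeg_label_class; apply/eqP; move: i; apply/once_iff; split.
  by rewrite -mult_at_label_mult.
move=> e e'; rewrite !inE => ev e'v ne.
by move/(_ e)/forallP/(_ e')/implyP: disjL; apply; rewrite ev e'v ne.
Qed.

Hypothesis G_wf : is_bgraph G.

Lemma boundary_edges_le1 j : (#|[set e | incident e (bd G j)]| <= 1)%N.
Proof. by case: G_wf. Qed.

Lemma almost_perfect_label_classE L :
  [forall i, almost_perfect (label_class L i)] =
  weblike (label_mult L) && [forall v, interior v ==> labels_disjoint_at L v].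
Proof.
have mdeg_bd v : ~~ interior v -> forall i, (mdeg (label_class L i) v <= 1)%N.
  rewrite /interior negbK => /existsP [j /eqP <-] i.
  apply: leq_trans (boundary_edges_le1 j); rewrite mdeg_label_class.
  by apply: subset_leq_card; apply/subsetP => e; rewrite !inE => /andP[].
apply/idP/idP => [/forallP AP | /andP[/forallP web /forallP disjL]].
  have at_interior v : interior v ->
      (mult_at (label_mult L) v == r) && labels_disjoint_at L v.
    move=> iv; apply/mdeg_label_class1P => i.
    by have := forallP (AP i) v; rewrite iv.
  by apply/andP; split; apply/forallP => v; apply/implyP => /at_interior/andP[].
apply/forallP => i; apply/forallP => v.
case: ifP => iv; last by apply: mdeg_bd; rewrite iv.
move: i; apply/mdeg_label_class1P.
by rewrite (implyP (web v) iv) (implyP (disjL v) iv).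
Qed.

Lemma blabel_mdeg L j i :
  (i \in blabel L j) = (mdeg (label_class L i) (bd G j) == 1%N).
Proof.
rewrite mdeg_label_class; set B := [set e in _ | _].
have B_le1 : (#|B| <= 1)%N.
  apply: leq_trans (boundary_edges_le1 j); apply: subset_leq_card.
  by apply/subsetP => e; rewrite !inE => /andP[].
have [B0 | [e eB]] := set_0Vmem B.
  rewrite B0 cards0 /=; apply/bigcupP => [[e ej ie]].
  have : e \in B by rewrite !inE ej ie.
  by rewrite B0 inE.
have -> : #|B| == 1%N by rewrite eqn_leq B_le1 card_gt0; apply/set0Pn; exists e.
by apply/bigcupP; exists e; move: eB; rewrite !inE => /andP[].
Qed.

Lemma bdry_label_classE L (S : 'I_n -> {set 'I_r}) :
  [forall i, bdry (label_class L i) == dual_list S i] =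
  [forall j, blabel L j == S j].
Proof.
apply/forallP/forallP => bdL x; apply/eqP/setP => y;
  by move/eqP/setP/(_ x): (bdL y); rewrite /bdry /dual_list !inE -blabel_mdeg.
Qed.

Lemma web_degree_label_mult L j : web_degree (label_mult L) j = #|blabel L j|.
Proof.
rewrite /web_degree mult_at_label_mult /blabel.
rewrite (eq_bigl (fun e => incident e (bd G j))) => [|e]; last by rewrite inE.
have [A0 | [e0 e0j]] := set_0Vmem [set e | incident e (bd G j)].
  have to_none : (fun e => incident e (bd G j)) =1 xpred0.
    move=> e /=; apply/negbTE/negP => ej; suff : e \in set0 by rewrite inE.
    by rewrite -A0 inE.
  by rewrite !big_pred0 ?cards0.
have to_e0 : (fun e => incident e (bd G j)) =1 pred1 e0.
  by move=> e /=; have := card_le1P (boundary_edges_le1 j) e0 e0j e; rewrite inE.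
by rewrite !(big_pred1 e0 to_e0).
Qed.

Section Weights.
Variables (R : comNzRingType) (wt : gE G -> R).

Lemma prod_wt_match_label_class L :
  (\prod_(i < r) wt_match wt (label_class L i) = wt_web wt (label_mult L))%R.
Proof.
rewrite /wt_match /wt_web; under [LHS]eq_bigr => i _ do rewrite big_mkcond /=.
rewrite exchange_big; apply: eq_bigr => e _.
rewrite label_multE -(prodr_const (mem (L e))) [RHS]big_mkcond.
by apply: eq_bigr => i _; rewrite !(ffunE, inE).
Qed.

Lemma prod_Delta_web_labelings (S : 'I_n -> {set 'I_r}) :
  (\prod_(i < r) Delta wt (dual_list S i)
     = \sum_(L | web_labeling S L) wt_web wt (label_mult L))%R.
Proof.
rewrite /Delta bigA_distr_big_dep (reindex label_class); last first.
  exact/onW_bij/label_class_bij.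
apply: eq_big => [L | L _]; last exact: prod_wt_match_label_class.
transitivity ([forall i, almost_perfect (label_class L i)] &&
              [forall i, bdry (label_class L i) == dual_list S i]).
  apply/familyP/andP => [inF | [/forallP AP /forallP bdL] i].
    by split; apply/forallP => i; have := inF i; rewrite unfold_in => /andP[].
  by rewrite unfold_in AP bdL.
rewrite almost_perfect_label_classE bdry_label_classE /web_labeling /consistent.
have -> : [forall e, #|L e| == (label_mult L e : nat)].
  by apply/forallP => e; rewrite label_multE.
by rewrite -!andbA.
Qed.

Lemma signS_mul_Web_at (lam : 'I_n -> nat) (S : 'I_n -> {set 'I_r}) :
  (forall j, #|S j| = lam j) ->
  (signS R S * Web_at wt lam S
     = \sum_(L | web_labeling S L) wt_web wt (label_mult L))%R.
Proof.
move=> sizeS.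
have signS2 : (signS R S * signS R S = 1)%R.
  by rewrite /signS -exprMn mulrNN mulr1 expr1n.
rewrite /Web_at mulr_sumr.
under eq_bigr => m _ do rewrite /web_invariant_at mulrCA [X in (_ * X)%R]mulrA
  signS2 mul1r mulr_natr /a_count -sumr_const.
rewrite (exchange_big_dep predT) //= [RHS]big_mkcond; apply: eq_bigr => L _.
have [/and3P[web consL bdL] | not_web] := boolP (web_labeling S L).
  rewrite (big_pred1 (label_mult L)) // => m /=; rewrite inE.
  apply/idP/eqP => [/andP[_ /andP[/consistent_label_mult -> _]] // | ->].
  rewrite web consL bdL /= andbT; apply/forallP => j.
  by rewrite web_degree_label_mult (eqP (forallP bdL j)) sizeS.
rewrite big_pred0 // => m; rewrite inE; apply/negbTE/negP.
move=> /andP[/andP[web _] /andP[consL bdL]]; case/negP: not_web.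
by rewrite /web_labeling -(consistent_label_mult consL) web consL bdL.
Qed.

End Weights.
End Labelings.

Theorem mainTheorem3 (n : nat) (G : bgraph n) (C : numClosedFieldType)
  (wt : gE G -> C) (k r : nat) (lam : 'I_n -> nat) (S : 'I_n -> {set 'I_r}) :
  is_bgraph G ->
  (forall e, wt e != 0%R) ->
  (exists pi : {set gE G}, almost_perfect pi) ->
  k = exced G ->
  (1 <= r)%N ->
  (forall j, lam j <= r)%N ->
  (\sum_(j < n) lam j)%N = (k * r)%N ->
  (forall j, #|S j| = lam j) ->
  (forall i, #|[set j | i \in S j]| = k) ->
  (\prod_(i < r) Delta wt (dual_list S i))%R
    = (signS C S * Web_at wt lam S)%R.
Proof.
move=> G_wf _ _ _ _ _ _ sizeS _.
by rewrite prod_Delta_web_labelings // signS_mul_Web_at.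
Qed.
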